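(* Let $h:(\mathbb{R}^n,0)\to(\mathbb{R}^n,0)$ be a bi-Lipschitz homeomorphism (germ). Suppose $\gamma_1,\gamma_2\in\mathcal{A}(\mathbb{R}^n,0)$ satisfy $T(\gamma_1)=T(\gamma_2)$. Then for any sequence of points $\{a_m\}\subset h(\gamma_1)$ tending to $0$ with $\lim_{m\to\infty}a_m/\|a_m\|=a\in S^{n-1}$, there is a sequence of points $\{b_m\}\subset h(\gamma_2)$ tending to $0$ with $\lim_{m\to\infty}b_m/\|b_m\|=a$. In particular $D(h(\gamma_1))=D(h(\gamma_2))$.
   Context: A bi-Lipschitz homeomorphism germ is a homeomorphism between neighbourhoods of $0$ fixing $0$ with $K_1|x-y|\le|h(x)-h(y)|\le K_2|x-y|$ for some $0<K_1\le K_2$ near $0$. $\mathcal{A}(\mathbb{R}^n,0)$ is the set of germs of analytic maps $\lambda:[0,\epsilon)\to\mathbb{R}^n$ with $\lambda(0)=0$ and $\lambda(s)\ne0$ for $s>0$; an arc is identified with its image. For such $\lambda$ there is a unique $a\in S^{n-1}$ such that $\lambda$ is tangent at $0$ to the half-line $L(a)=\{ta: t\ge0\}$, and $T(\lambda):=L(a)$. Direction set: $D(X)=\{a\in S^{n-1} : \exists\, \{x_i\}\subset X\setminus\{0\},\ x_i\to 0,\ x_i/\|x_i\|\to a\}$. *)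

From HB Require Import structures.
From mathcomp Require Import all_boot all_order all_algebra.
From mathcomp Require Import all_classical all_reals all_analysis.
Set Implicit Arguments. Unset Strict Implicit. Unset Printing Implicit Defensive.
Import Order.TTheory GRing.Theory Num.Theory.
Import numFieldNormedType.Exports.
Local Open Scope classical_set_scope.
Local Open Scope ring_scope.

(* Euclidean norm on R^n (the library norm on matrices is the sup norm). *)
Definition enorm {R : realType} {n : nat} (x : 'rV[R]_n) : R :=
  Num.sqrt (\sum_(i < n) x ord0 i ^+ 2).

Definition dir {R : realType} {n : nat} (x : 'rV[R]_n) : 'rV[R]_n :=
  (enorm x)^-1 *: x.

Definition sphere {R : realType} (n : nat) : set 'rV[R]_n :=
  [set a | enorm a = 1].

(* h is (a representative of) a bi-Lipschitz homeomorphism germ at 0: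
   a homeomorphism between open neighbourhoods U, V of 0, fixing 0, and
   bi-Lipschitz (for the Euclidean norm) near 0. *)
Definition bilip_homeo_germ {R : realType} {n : nat}
    (h : 'rV[R]_n -> 'rV[R]_n) : Prop :=
  h 0 = 0 /\
  (exists (U V : set 'rV[R]_n) (g : 'rV[R]_n -> 'rV[R]_n),
      [/\ open U, open V, U 0, V 0 &
      [/\ h @` U = V, {within U, continuous h}, {within V, continuous g},
          (forall x, U x -> g (h x) = x) & (forall y, V y -> h (g y) = y)]]) /\
  (exists (K1 K2 r : R), [/\ 0 < K1, K1 <= K2, 0 < r &
      forall x y, enorm x < r -> enorm y < r ->
        K1 * enorm (x - y) <= enorm (h x - h y) /\
        enorm (h x - h y) <= K2 * enorm (x - y)]).

(* lambda is (a representative of) an element of A(R^n,0): a real analytic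
   map germ [0,eps) -> R^n, given by a convergent power series on [0,eps),
   with lambda(0) = 0 and lambda(s) <> 0 for 0 < s < eps. *)
Definition analytic_arc {R : realType} {n : nat} (lam : R -> 'rV[R]_n) : Prop :=
  exists (eps : R) (c : nat -> 'rV[R]_n),
    [/\ 0 < eps,
        (forall t, 0 <= t < eps ->
           (fun N : nat => \sum_(k < N) (t ^+ k) *: c k) @ \oo --> lam t),
        lam 0 = 0 &
        (forall s, 0 < s < eps -> lam s <> 0)].

(* lambda is tangent at 0 to the half-line L(a) = {t a : t >= 0}:
   lambda(s)/||lambda(s)|| -> a as s -> 0+ ; T(lambda) = L(a). *)
Definition tangent_to {R : realType} {n : nat} (lam : R -> 'rV[R]_n)
    (a : 'rV[R]_n) : Prop :=
  @sphere R n a /\ (fun s => dir (lam s)) @ 0^'+ --> a.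

Definition dirset {R : realType} {n : nat} (X : set 'rV[R]_n) : set 'rV[R]_n :=
  [set a | @sphere R n a /\
     exists x : nat -> 'rV[R]_n,
       [/\ (forall i, X (x i) /\ x i <> 0), x @ \oo --> (0 : 'rV[R]_n)
         & (fun i => dir (x i)) @ \oo --> a]].

(* representative of the set germ h(lambda) : image of [0, d) *)
Definition arc_image {R : realType} {n : nat} (h : 'rV[R]_n -> 'rV[R]_n)
    (lam : R -> 'rV[R]_n) (d : R) : set 'rV[R]_n :=
  [set h (lam t) | t in `[0, d[].

(* Let a_m = h(gam1(t_m)) and rho_m = |gam1(t_m)|, so that |a_m| >= K1 rho_m.
   By the intermediate value theorem pick s_m with |gam2(s_m)| = rho_m; since
   t_m, s_m -> 0 and both arcs are tangent to the same half-line L(a0), the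
   points gam1(t_m) and gam2(s_m) have nearly the same direction, hence are at
   distance o(rho_m).  Being K2-Lipschitz, h keeps b_m = h(gam2(s_m)) at
   distance o(rho_m) = o(|a_m|) from a_m, so b_m has the same limit direction
   as a_m.  Swapping the arcs gives the equality of the direction sets. *)

From HB Require Import structures.
From mathcomp Require Import all_boot all_order all_algebra.
From mathcomp Require Import all_classical all_reals all_analysis.
From mathcomp Require Import ring lra.
Import Order.TTheory GRing.Theory Num.Theory.
Import numFieldNormedType.Exports.
Local Open Scope classical_set_scope.
Local Open Scope ring_scope.

Section EuclideanNorm.
Context {R : realType} {n : nat}.
Implicit Types (x y : 'rV[R]_n).

Lemma enorm_ge0 x : 0 <= enorm x.
Proof. exact: sqrtr_ge0. Qed.

Lemma enorm_sqr x : enorm x ^+ 2 = \sum_(i < n) x ord0 i ^+ 2.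
Proof. by rewrite sqr_sqrtr // sumr_ge0 // => i _; exact: sqr_ge0. Qed.

Lemma enorm0 : enorm (0 : 'rV[R]_n) = 0.
Proof. by rewrite /enorm big1 ?sqrtr0 // => i _; rewrite mxE expr0n. Qed.

Lemma enorm_eq0 x : (enorm x == 0) = (x == 0).
Proof.
apply/idP/eqP => [|->]; last by rewrite enorm0.
rewrite -sqrf_eq0 enorm_sqr psumr_eq0 => [/allP x0|i _]; last exact: sqr_ge0.
apply/matrixP => i j; rewrite ord1 mxE.
by apply/eqP; rewrite -sqrf_eq0; apply: implyP (x0 j (mem_index_enum _)) _.
Qed.

Lemma enorm_gt0 x : x != 0 -> 0 < enorm x.
Proof. by move=> x0; rewrite lt_neqAle enorm_ge0 andbT eq_sym enorm_eq0. Qed.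
Arguments enorm_gt0 {x}.

Lemma enormZ (k : R) x : enorm (k *: x) = `|k| * enorm x.
Proof.
rewrite /enorm -sqrtr_sqr -sqrtrM ?sqr_ge0 //; congr Num.sqrt.
by rewrite mulr_sumr; apply: eq_bigr => i _; rewrite mxE exprMn.
Qed.

Lemma enormN x : enorm (- x) = enorm x.
Proof. by rewrite -scaleN1r enormZ normrN normr1 mul1r. Qed.

Lemma enorm_distC x y : enorm (x - y) = enorm (y - x).
Proof. by rewrite -enormN opprB. Qed.

Lemma ler_coord_enorm x i : `|x ord0 i| <= enorm x.
Proof.
rewrite -ler_sqr ?nnegrE ?enorm_ge0 // real_normK ?num_real // enorm_sqr.
by rewrite (bigD1 i) //= lerDl sumr_ge0 // => j _; exact: sqr_ge0.
Qed.

Lemma cauchy_schwarz_enorm x y :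
  \sum_(i < n) x ord0 i * y ord0 i <= enorm x * enorm y.
Proof.
have [->|x0] := eqVneq x 0.
  by rewrite enorm0 mul0r big1 // => i _; rewrite mxE mul0r.
have [->|y0] := eqVneq y 0.
  by rewrite enorm0 mulr0 big1 // => i _; rewrite mxE mulr0.
have a0 := enorm_gt0 x0; have b0 := enorm_gt0 y0.
set a := enorm x in a0 *; set b := enorm y in b0 *.
(* AM-GM on each coordinate, weighted so that the bounds sum to [a * b]. *)
have amgm i : x ord0 i * y ord0 i <=
    ((b / a) * x ord0 i ^+ 2 + (a / b) * y ord0 i ^+ 2) / 2.
  rewrite ler_pdivlMr // -subr_ge0.
  have -> : b / a * x ord0 i ^+ 2 + a / b * y ord0 i ^+ 2 - x ord0 i * y ord0 i * 2
      = (a * b)^-1 * (b * x ord0 i - a * y ord0 i) ^+ 2.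
    by field; rewrite !gt_eqF.
  by rewrite mulr_ge0 ?sqr_ge0 // invr_ge0 mulr_ge0 // ltW.
apply: le_trans (ler_sum _ (fun i _ => amgm i)) _.
rewrite -mulr_suml big_split /= -!mulr_sumr -!enorm_sqr -/a -/b.
by rewrite le_eqVlt; apply/orP; left; apply/eqP; field; rewrite !gt_eqF.
Qed.

Lemma enormD x y : enorm (x + y) <= enorm x + enorm y.
Proof.
rewrite -ler_sqr ?nnegrE ?addr_ge0 ?enorm_ge0 // sqrrD !enorm_sqr.
have -> : \sum_(i < n) (x + y) ord0 i ^+ 2 =
    \sum_(i < n) x ord0 i ^+ 2 + (\sum_(i < n) x ord0 i * y ord0 i) *+ 2
    + \sum_(i < n) y ord0 i ^+ 2.
  by rewrite -sumrMnl -!big_split /=; apply: eq_bigr => i _; rewrite mxE sqrrD.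
by rewrite lerD2r lerD2l lerMn2r /= cauchy_schwarz_enorm.
Qed.

Lemma ler_enorm_distD x y z : enorm (x - z) <= enorm (x - y) + enorm (y - z).
Proof. by have := enormD (x - y) (y - z); rewrite addrA subrK. Qed.

Lemma ler_enorm_dist_dist x y : `|enorm x - enorm y| <= enorm (x - y).
Proof.
have tri (u v : 'rV[R]_n) : enorm u - enorm v <= enorm (u - v).
  by rewrite lerBlDr; apply: le_trans (enormD _ _); rewrite subrK.
by rewrite ler_norml tri andbT lerNl opprB enorm_distC tri.
Qed.

Lemma mx_norm_le_enorm x : `|x| <= enorm x.
Proof.
have [->|/mx_norm_neq0 [[i j] xij]] := eqVneq `|x| 0; first exact: enorm_ge0.
by rewrite [`|x|]xij /= ord1; exact: ler_coord_enorm.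
Qed.

Lemma enorm_le_mx_norm x : enorm x <= n%:R * `|x|.
Proof.
rewrite -ler_sqr ?nnegrE ?mulr_ge0 ?enorm_ge0 // enorm_sqr.
apply: le_trans (_ : \sum_(i < n) `|x| ^+ 2 <= _).
  apply: ler_sum => i _; rewrite -real_normK ?num_real //.
  rewrite lerXn2r ?nnegrE // [`|x|]mx_normrE.
  by apply/bigmax_geP; right; exists (ord0, i).
rewrite sumr_const card_ord exprMn -[_ *+ n]mulr_natl ler_wpM2r ?sqr_ge0 //.
by rewrite -natrX ler_nat; case: n => // m; rewrite expnS leq_pmulr.
Qed.

Lemma cvg_enormP {T} {F : set_system T} {FF : Filter F} (f : T -> 'rV[R]_n) y :
  f @ F --> y <-> (fun t => enorm (f t - y)) @ F --> 0.
Proof.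
rewrite cvgrPdistC_lt cvgr0Pnorm_lt; split => f_y e e0.
  have n1 : (0 : R) < n%:R + 1 by rewrite ltr_wpDl.
  apply: filterS (f_y _ (divr_gt0 e0 n1)) => t fty; rewrite ger0_norm ?enorm_ge0//.
  apply: le_lt_trans (enorm_le_mx_norm _) _.
  apply: le_lt_trans (_ : (n%:R + 1) * `|f t - y| < _); last by rewrite mulrC -ltr_pdivlMr.
  by rewrite ler_wpM2r // lerDl.
apply: filterS (f_y e e0) => t; rewrite ger0_norm ?enorm_ge0//.
exact/le_lt_trans/mx_norm_le_enorm.
Qed.

Lemma dir0 : dir (0 : 'rV[R]_n) = 0.
Proof. by rewrite /dir scaler0. Qed.

Lemma enorm_dirB_le x y : x != 0 ->
  enorm (dir x - dir y) <= 2 * enorm (x - y) / enorm x.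
Proof.
move=> x0; have ex := enorm_gt0 x0.
have -> : dir x - dir y =
    (enorm x)^-1 *: (x - y) + ((enorm x)^-1 - (enorm y)^-1) *: y.
  by rewrite /dir scalerBr scalerBl addrA subrK.
apply: le_trans (enormD _ _) _; rewrite !enormZ ger0_norm ?invr_ge0 ?(ltW ex) //.
have key : `|(enorm x)^-1 - (enorm y)^-1| * enorm y <= enorm (x - y) / enorm x.
  have [->|y0] := eqVneq y 0.
    by rewrite enorm0 mulr0 subr0 divr_ge0 ?enorm_ge0 ?(ltW ex).
  have ey := enorm_gt0 y0.
  have -> : `|(enorm x)^-1 - (enorm y)^-1| * enorm y = `|enorm y - enorm x| / enorm x.
    rewrite -[X in _ * X = _](ger0_norm (ltW ey)) -[X in _ = _ / X](ger0_norm (ltW ex)).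
    by rewrite -normfV -!normrM; congr `|_|; field; rewrite !gt_eqF.
  by rewrite ler_pM2r ?invr_gt0 // enorm_distC ler_enorm_dist_dist.
apply: le_trans (lerD (lexx _) key) _.
by rewrite le_eqVlt; apply/orP; left; apply/eqP; ring.
Qed.

Lemma enormB_dir x y : enorm x = enorm y ->
  enorm (x - y) = enorm x * enorm (dir x - dir y).
Proof.
have [->|x0] := eqVneq x 0 => xy.
  by move/esym/eqP: xy; rewrite enorm0 enorm_eq0 => /eqP ->; rewrite subr0 enorm0 mul0r.
rewrite -[in RHS](ger0_norm (enorm_ge0 x)) -enormZ /dir -xy scalerBr !scalerA.
by rewrite mulfV ?scale1r // enorm_eq0.
Qed.

End EuclideanNorm.

Section PowerSeries.
Context {R : realType}.
Implicit Types (c : R^nat) (x z : R).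

(* Comparison with the geometric series of ratio 1/2, using [k.+1 <= 2 ^ k]. *)
Lemma is_cvg_pseries_diffs_inside c x z : 0 < x -> cvgn (pseries c x) ->
  4 * `|z| <= x -> cvgn (pseries (pseries_diffs c) z).
Proof.
move=> x0 cx zx.
have [M cM] : exists M, forall k, `|c k * x ^+ k| <= M.
  have [K [_ cK]] := cvg_series_bounded cx.
  by exists `|K + 1| => k; apply: cK => //; rewrite (lt_le_trans _ (ler_norm _)) // ltrDl.
have M0 : 0 <= M := le_trans (normr_ge0 _) (cM 0%N).
apply: normed_cvg; apply: (@series_le_cvg _ _ (geometric (M / x) (2^-1))).
- by move=> k; exact: normr_ge0.
- by move=> k; rewrite /geometric /= mulr_ge0 ?exprn_ge0 ?invr_ge0 ?divr_ge0 ?(ltW x0).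
- move=> k; rewrite /geometric /= /pseries_diffs !normrM normr_nat normrX.
  have ck : `|c k.+1| <= M / x ^+ k.+1.
    by rewrite ler_pdivlMr ?exprn_gt0 // -[x ^+ _]gtr0_norm ?exprn_gt0 // -normrM.
  have k2 : (k.+1%:R : R) <= 2 ^+ k by rewrite -natrX ler_nat; exact: ltn_expl.
  have zk : `|z| ^+ k <= (x / 4) ^+ k.
    by rewrite lerXn2r ?nnegrE ?divr_ge0 ?(ltW x0) // ler_pdivlMr // mulrC.
  apply: le_trans (_ : 2 ^+ k * (M / x ^+ k.+1) * (x / 4) ^+ k <= _).
    by rewrite ler_pM ?mulr_ge0 ?exprn_ge0 // ler_pM.
  have -> : (x / 4) ^+ k = x ^+ k / (2 ^+ k * 2 ^+ k).
    by rewrite -exprMn -natrM expr_div_n.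
  rewrite exprVn exprS le_eqVlt; apply/orP; left; apply/eqP; field.
  by rewrite !expf_neq0 // gt_eqF.
- by apply: is_cvg_geometric_series; rewrite gtr0_norm ?invr_gt0 // invf_lt1 // ltr1n.
Qed.

(* [16 = 4 * 4]: the series is differentiated twice, each time shrinking the
   radius by the factor 4 of [is_cvg_pseries_diffs_inside]. *)
Lemma pseries_continuous c x : 0 < x -> cvgn (pseries c x) ->
  forall z, `|z| < x / 16 -> {for z, continuous (fun y => limn (pseries c y))}.
Proof.
move=> x0 cx z zx.
have cd1 : cvgn (pseries (pseries_diffs c) (x / 4)).
  by apply: (is_cvg_pseries_diffs_inside _ _ _ x0 cx); rewrite gtr0_norm ?divr_gt0 //; lra.
have cd2 : cvgn (pseries (pseries_diffs (pseries_diffs c)) (x / 16)).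
  by apply: (is_cvg_pseries_diffs_inside _ _ _ _ cd1); rewrite ?gtr0_norm ?divr_gt0 //; lra.
have c0 : cvgn (pseries c (x / 16)).
  by apply: (is_cvg_pseries_inside cx); rewrite !gtr0_norm ?divr_gt0 //; lra.
have cd0 : cvgn (pseries (pseries_diffs c) (x / 16)).
  by apply: (is_cvg_pseries_inside cd1); rewrite !gtr0_norm ?divr_gt0 //; lra.
have [+ _] := pseries_snd_diffs c0 cd0 cd2 (lt_le_trans zx (ler_norm _)).
by move/derivable1_diffP/differentiable_continuous.
Qed.

End PowerSeries.

(* The properties of an analytic arc that the argument uses. *)
Definition norm_continuous_arc {R : realType} {n : nat} (lam : R -> 'rV[R]_n)
    (e : R) : Prop :=
  [/\ lam 0 = 0, forall s, 0 < s <= e -> lam s <> 0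
    & {within `[0, e], continuous (fun t => enorm (lam t))}].

Section Arcs.
Context {R : realType} {n : nat}.
Implicit Types (lam : R -> 'rV[R]_n) (e d : R).

(* [lam] agrees with its power series only on [[0, eps[], so the continuity of
   its norm is read off the coordinate power series, which are differentiable
   strictly inside their radius of convergence. *)
Lemma analytic_arc_norm_continuous lam :
  analytic_arc lam -> exists2 e, 0 < e & norm_continuous_arc lam e.
Proof.
case=> eps [c [eps0 lamE lam0 lam_neq0]].
pose f i t := limn (pseries (fun k => c k ord0 i) t).
have f_cvg i t : 0 <= t < eps -> pseries (fun k => c k ord0 i) t @ \oo --> lam t ord0 i.
  move=> /lamE lamt.
  have -> : pseries (fun k => c k ord0 i) t =
      (fun M : 'rV[R]_n => M ord0 i) \o (fun N => \sum_(k < N) t ^+ k *: c k).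
    apply/funext => N /=; rewrite /pseries /series /= summxE big_mkord.
    by apply: eq_bigr => k _; rewrite mxE mulrC.
  by apply: cvg_comp lamt _; exact: coord_continuous.
have f_cont i t : `|t| < eps / 32 -> {for t, continuous (f i)}.
  move=> t_lt; apply: (pseries_continuous _ (eps / 2)); first lra.
    by apply: cvgP (f_cvg i _ _); apply/andP; split; lra.
  by rewrite (lt_le_trans t_lt) //; lra.
exists (eps / 64); first lra; split => //.
  by move=> s /andP[s0 se]; apply: lam_neq0; rewrite s0 (le_lt_trans se) //; lra.
apply: (@subspace_eq_continuous _ _ _ (fun t => Num.sqrt (\sum_(i < n) f i t ^+ 2))).
  move=> t; rewrite inE /= in_itv /= => /andP[t0 te]; rewrite /enorm.
  congr Num.sqrt; apply: eq_bigr => i _.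
  have t_in : 0 <= t < eps by apply/andP; split; lra.
  by rewrite /f (cvg_lim _ (f_cvg i t t_in)).
apply: continuous_in_subspaceT => t; rewrite inE /= in_itv /= => /andP[t0 te].
have t_lt : `|t| < eps / 32 by rewrite ger0_norm //; lra.
apply: (@continuous_comp _ _ _ (fun t => \sum_(i < n) f i t ^+ 2)).
  apply: (@cvg_big R _ +%R 0 xpredT add_continuous) => // i _.
  exact: cvgM (f_cont i t t_lt) (f_cont i t t_lt).
exact: sqrt_continuous.
Qed.

Lemma norm_continuous_arcW lam d e : d <= e ->
  norm_continuous_arc lam e -> norm_continuous_arc lam d.
Proof.
move=> de [lam0 lam_neq0 lam_cont]; split => //.
  by move=> s /andP[s0 sd]; apply: lam_neq0; rewrite s0 (le_trans sd).
by apply: continuous_subspaceW lam_cont; apply: subset_itvl; rewrite bnd_simp.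
Qed.

Section NormContinuousArc.
Context {lam : R -> 'rV[R]_n} {e : R}.
Hypothesis lam_arc : norm_continuous_arc lam e.

Lemma arc_enorm_lt_near0 r : 0 < e -> 0 < r ->
  exists2 del, 0 < del <= e & forall t, 0 <= t <= del -> enorm (lam t) < r.
Proof.
move=> e0 r0; have [lam0 _ lam_cont] := lam_arc.
have [_ + _] := (continuous_within_itvP _ e0).1 lam_cont.
rewrite lam0 enorm0 => /cvgr0Pnorm_lt/(_ r r0)[del /= del0 small].
exists (Num.min (del / 2) e); first by rewrite lt_min divr_gt0 // e0 ge_min lexx orbT.
move=> t /andP[t0]; rewrite le_min => /andP[tdel _].
have [<-|t_neq0] := eqVneq 0 t; first by rewrite lam0 enorm0.
have /small : ball 0 del t.
  by rewrite /ball /= sub0r normrN ger0_norm // (le_lt_trans tdel) // ltr_pdivrMr //; lra.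
by rewrite ger0_norm ?enorm_ge0 //; apply; rewrite lt_neqAle t_neq0.
Qed.

Lemma arc_param_lt_of_enorm del : 0 < del ->
  exists2 mu, 0 < mu & forall t, 0 <= t <= e -> enorm (lam t) < mu -> t < del.
Proof.
move=> del0; have [lam0 lam_neq0 lam_cont] := lam_arc.
have [edel|dele] := ltP e del.
  by exists 1 => // t /andP[_ te] _; apply: le_lt_trans edel.
have cont : {within `[del, e], continuous (fun t => enorm (lam t))}.
  by apply: continuous_subspaceW lam_cont; apply: subset_itvr; rewrite bnd_simp ltW.
have [c] := EVT_min dele cont; rewrite in_itv /= => /andP[delc ce] cmin.
have c0 : 0 < c := lt_le_trans del0 delc.
exists (enorm (lam c)); first by apply: enorm_gt0; apply/eqP; apply: lam_neq0; rewrite c0.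
move=> t /andP[t0 te]; apply: contraTT; rewrite -!leNgt => delt.
by apply: cmin; rewrite in_itv /= delt.
Qed.

Lemma arc_param_cvg0 (t : nat -> R) : (forall m, 0 <= t m <= e) ->
  (fun m => enorm (lam (t m))) @ \oo --> 0 -> t @ \oo --> 0.
Proof.
move=> tI /cvgr0Pnorm_lt lamt0; apply/cvgr0Pnorm_lt => del del0.
have [mu mu0 small] := arc_param_lt_of_enorm _ del0.
apply: filterS (lamt0 _ mu0) => m; rewrite !ger0_norm ?enorm_ge0 //; last by case/andP: (tI m).
exact: small.
Qed.

Lemma arc_attains_enorm c rho : 0 < c <= e -> 0 < rho < enorm (lam c) ->
  exists2 s, 0 < s <= c & enorm (lam s) = rho.
Proof.
move=> /andP[c0 ce] /andP[rho0 rhoc]; have [lam0 _ lam_cont] := lam_arc.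
have cont : {within `[0, c], continuous (fun t => enorm (lam t))}.
  by apply: continuous_subspaceW lam_cont; apply: subset_itvl; rewrite bnd_simp.
have rho_range : Num.min (enorm (lam 0)) (enorm (lam c)) <= rho <=
    Num.max (enorm (lam 0)) (enorm (lam c)).
  by rewrite lam0 enorm0 min_l ?max_r ?enorm_ge0 // !ltW.
have [s] := IVT (ltW c0) cont rho_range; rewrite in_itv /= => /andP[s0 sc] lams.
exists s => //; rewrite sc andbT lt_neqAle s0 andbT.
by apply: (contraTneq _ rho0) => s_eq0; rewrite -lams -s_eq0 lam0 enorm0 ltxx.
Qed.

Lemma arc_enorm_section (rho : R^nat) : 0 < e -> rho @ \oo --> 0 ->
  (\forall m \near \oo, 0 < rho m) ->
  exists s : R^nat, [/\ forall m, 0 < s m < e, s @ \oo --> 0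
    & \forall m \near \oo, enorm (lam (s m)) = rho m].
Proof.
move=> e0 rho0 rho_pos; have [_ lam_neq0 _] := lam_arc.
have c_in : 0 < e / 2 <= e by apply/andP; split; lra.
have lam_c : 0 < enorm (lam (e / 2)).
  by apply: enorm_gt0; apply/eqP; apply: lam_neq0.
have /choice [s sP] : forall m, exists s, 0 < s < e /\
    (0 < rho m < enorm (lam (e / 2)) -> enorm (lam s) = rho m).
  move=> m; have [rho_in|_] := boolP (0 < rho m < enorm (lam (e / 2))).
    have [s /andP[s0 se] lams] := arc_attains_enorm _ _ c_in rho_in.
    by exists s; rewrite s0 (le_lt_trans se) //=; lra.
  by exists (e / 2); split => //; apply/andP; split; lra.
have s_rho : \forall m \near \oo, enorm (lam (s m)) = rho m.
  apply: filterS2 rho_pos ((cvgr0Pnorm_lt _).1 rho0 _ lam_c) => m rho_m0 rho_small.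
  by apply: (sP m).2; rewrite rho_m0 -[rho m]ger0_norm ?ltW.
exists s; split => //; first by move=> m; have [] := sP m.
apply: arc_param_cvg0 => [m|]; first by have [/andP[sm0 sme] _] := sP m; rewrite !ltW.
by apply: cvg_trans rho0; apply: near_eq_cvg; apply: filterS s_rho => m ->.
Qed.

End NormContinuousArc.

End Arcs.

Section Directions.
Context {R : realType} {n : nat}.

Lemma cvg_at_right_seq (u : R^nat) p : u @ \oo --> p ->
  (\forall m \near \oo, p < u m) -> u @ \oo --> p^'+.
Proof. by move=> up upos A /up; apply: filterS2 upos => m pu /(_ pu). Qed.

Lemma tangent_dir_cvg (lam : R -> 'rV[R]_n) a0 (t : R^nat) :
  tangent_to lam a0 -> t @ \oo --> 0 -> (\forall m \near \oo, 0 < t m) ->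
  (fun m => dir (lam (t m))) @ \oo --> a0.
Proof.
by move=> [_ lam_a0] t0 tpos; apply: cvg_comp (cvg_at_right_seq _ _ t0 tpos) lam_a0.
Qed.

Lemma dir_cvg_near_neq0 {T} {F : set_system T} {FF : Filter F}
    (u : T -> 'rV[R]_n) a :
  sphere a -> (fun t => dir (u t)) @ F --> a -> \forall t \near F, u t != 0.
Proof.
move=> a1 /cvg_enormP/cvgr0Pnorm_lt/(_ 1 ltr01); apply: filterS => t.
by apply: contraTneq => ->; rewrite dir0 sub0r enormN a1 ger0_norm ?ltxx.
Qed.

Lemma cvg_enorm_squeeze {T} {F : set_system T} {FF : Filter F}
    (v : T -> R) (f : T -> 'rV[R]_n) y :
  (\forall t \near F, enorm (f t - y) <= v t) -> v @ F --> 0 -> f @ F --> y.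
Proof.
move=> fv v0; apply/cvg_enormP; apply: (squeeze_cvgr _ (cvg_cst 0) v0).
by apply: filterS fv => t ->; rewrite enorm_ge0.
Qed.

Lemma dirset_subset (X Y : set 'rV[R]_n) :
  (forall (am : nat -> 'rV[R]_n) (a : 'rV[R]_n),
     (forall m, X (am m)) -> am @ \oo --> (0 : 'rV[R]_n) -> sphere a ->
     (fun m => dir (am m)) @ \oo --> a ->
     exists bm : nat -> 'rV[R]_n,
       [/\ (forall m, Y (bm m) /\ bm m <> 0), bm @ \oo --> (0 : 'rV[R]_n)
         & (fun m => dir (bm m)) @ \oo --> a]) ->
  dirset X `<=` dirset Y.
Proof.
move=> XY a [a1 [am [Xam am0 dam]]].
have [bm [Ybm bm0 dbm]] := XY am a (fun m => (Xam m).1) am0 a1 dam.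
by split => //; exists bm.
Qed.

End Directions.

Section BiLipschitz.
Context {R : realType} {n : nat}.
Context {h : 'rV[R]_n -> 'rV[R]_n} {K1 K2 r : R}.
Hypotheses (K1_gt0 : 0 < K1) (K1_le_K2 : K1 <= K2) (h0 : h 0 = 0).
Hypothesis h_bilip : forall x y, enorm x < r -> enorm y < r ->
  K1 * enorm (x - y) <= enorm (h x - h y) /\ enorm (h x - h y) <= K2 * enorm (x - y).

Let bilip0 x : enorm x < r ->
  K1 * enorm x <= enorm (h x) /\ enorm (h x) <= K2 * enorm x.
Proof.
move=> xr; have r0 : enorm (0 : 'rV[R]_n) < r by rewrite enorm0 (le_lt_trans (enorm_ge0 x)).
by have := h_bilip _ _ xr r0; rewrite h0 !subr0.
Qed.

Lemma bilip_enorm_ge x : enorm x < r -> K1 * enorm x <= enorm (h x).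
Proof. by move=> /bilip0[]. Qed.

Lemma bilip_enorm_le x : enorm x < r -> enorm (h x) <= K2 * enorm x.
Proof. by move=> /bilip0[]. Qed.

Lemma bilip_neq0 x : enorm x < r -> x != 0 -> h x != 0.
Proof.
move=> xr x0; rewrite -enorm_eq0 gt_eqF //.
by apply: lt_le_trans (bilip_enorm_ge _ xr); rewrite mulr_gt0 ?enorm_gt0.
Qed.

Lemma enorm_dirB_bilip x y : enorm x < r -> enorm y < r -> x != 0 ->
  enorm x = enorm y ->
  enorm (dir (h x) - dir (h y)) <= 2 * K2 / K1 * enorm (dir x - dir y).
Proof.
move=> xr yr x0 xy; have hx0 := bilip_neq0 _ xr x0.
have K2_gt0 : 0 < K2 := lt_le_trans K1_gt0 K1_le_K2.
apply: le_trans (enorm_dirB_le _ _ hx0) _; rewrite ler_pdivrMr ?enorm_gt0 //.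
apply: le_trans (_ : 2 * (K2 * enorm (x - y)) <= _).
  by rewrite ler_pM2l // (h_bilip _ _ xr yr).2.
rewrite enormB_dir //.
apply: le_trans (_ : 2 * K2 / K1 * enorm (dir x - dir y) * (K1 * enorm x) <= _).
  by rewrite le_eqVlt; apply/orP; left; apply/eqP; field; rewrite gt_eqF.
by rewrite ler_wpM2l ?bilip_enorm_ge // mulr_ge0 ?enorm_ge0 // divr_ge0 ?mulr_ge0 ?ltW.
Qed.

Context {d : R} {g1 g2 : R -> 'rV[R]_n} {a0 : 'rV[R]_n}.
Hypotheses (d_gt0 : 0 < d)
  (g1_arc : norm_continuous_arc g1 d) (g2_arc : norm_continuous_arc g2 d)
  (g1_ball : forall t, 0 <= t <= d -> enorm (g1 t) < r)
  (g2_ball : forall t, 0 <= t <= d -> enorm (g2 t) < r)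
  (g1_a0 : tangent_to g1 a0) (g2_a0 : tangent_to g2 a0).

Lemma arc_image_param (am : nat -> 'rV[R]_n) :
  (forall m, arc_image h g1 d (am m)) -> am @ \oo --> (0 : 'rV[R]_n) ->
  (\forall m \near \oo, am m != 0) ->
  exists t : R^nat, [/\ forall m, 0 <= t m <= d /\ h (g1 (t m)) = am m,
    t @ \oo --> 0, \forall m \near \oo, 0 < t m,
    (fun m => enorm (g1 (t m))) @ \oo --> 0
    & \forall m \near \oo, 0 < enorm (g1 (t m))].
Proof.
move=> am_img am0 am_neq0; have [g1_0 _ _] := g1_arc.
have /choice [t tP] : forall m, exists t, 0 <= t <= d /\ h (g1 t) = am m.
  move=> m; have [t] := am_img m; rewrite /= in_itv /= => /andP[t0 td] <-.
  by exists t; rewrite t0 ltW.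
pose rho m := enorm (g1 (t m)).
have rho_pos : \forall m \near \oo, 0 < rho m.
  apply: filterS am_neq0 => m; rewrite -(tP m).2; apply: contraNT.
  rewrite -leNgt => rho_le0.
  have /eqP -> : g1 (t m) == 0 by rewrite -enorm_eq0 eq_le rho_le0 enorm_ge0.
  by rewrite h0.
have rho0 : rho @ \oo --> 0.
  apply: (squeeze_cvgr _ (cvg_cst 0) (_ : (fun m => K1^-1 * enorm (am m - 0)) @ \oo --> 0)).
    apply: nearW => m; rewrite enorm_ge0 subr0 /= ler_pdivlMl // -(tP m).2.
    exact: bilip_enorm_ge (g1_ball _ (tP m).1).
  by rewrite -(mulr0 K1^-1); apply: cvgMl_tmp; apply/cvg_enormP.
exists t; split => //; first exact: arc_param_cvg0 g1_arc _ (fun m => (tP m).1) rho0.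
apply: filterS rho_pos => m; apply: contraTT; rewrite /rho -!leNgt => tm_le0.
have -> : t m = 0 by apply/le_anti; rewrite tm_le0; case/andP: (tP m).1.
by rewrite g1_0 enorm0.
Qed.

Lemma arc_image_dir_transfer (am : nat -> 'rV[R]_n) (a : 'rV[R]_n) :
  (forall m, arc_image h g1 d (am m)) -> am @ \oo --> (0 : 'rV[R]_n) ->
  sphere a -> (fun m => dir (am m)) @ \oo --> a ->
  exists bm : nat -> 'rV[R]_n,
    [/\ (forall m, arc_image h g2 d (bm m) /\ bm m <> 0),
        bm @ \oo --> (0 : 'rV[R]_n) & (fun m => dir (bm m)) @ \oo --> a].
Proof.
move=> am_img am0 a1 dam; have [_ g2_neq0 _] := g2_arc.
have [t [tP t0 t_pos rho0 rho_pos]] :=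
  arc_image_param _ am_img am0 (dir_cvg_near_neq0 _ _ a1 dam).
have [s [sI s0 s_rho]] := arc_enorm_section g2_arc _ d_gt0 rho0 rho_pos.
have sI' m : 0 <= s m <= d by have /andP[s_gt0 sd] := sI m; rewrite !ltW.
have g2s_neq0 m : g2 (s m) != 0.
  by apply/eqP; apply: g2_neq0; have /andP[s_gt0 sd] := sI m; rewrite s_gt0 ltW.
exists (fun m => h (g2 (s m))); split.
- move=> m; split; last exact/eqP/(bilip_neq0 _ (g2_ball _ (sI' m)) (g2s_neq0 m)).
  by exists (s m) => //; have /andP[s_gt0 sd] := sI m; rewrite /= in_itv /= sd ltW.
- apply: (cvg_enorm_squeeze (fun m => K2 * enorm (g1 (t m)))); last first.
    by rewrite -(mulr0 K2); apply: cvgMl_tmp.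
  by apply: filterS s_rho => m <-; rewrite subr0; apply: bilip_enorm_le (g2_ball _ (sI' m)).
have /cvg_enormP dg1 := tangent_dir_cvg _ _ _ g1_a0 t0 t_pos.
have s_pos : \forall m \near \oo, 0 < s m by apply: nearW => m; case/andP: (sI m).
have /cvg_enormP dg2 := tangent_dir_cvg _ _ _ g2_a0 s0 s_pos.
have /cvg_enormP dam0 := dam.
have K0 : 0 <= 2 * K2 / K1 by rewrite !mulr_ge0 ?invr_ge0 ?ltW // (lt_le_trans K1_gt0).
apply: (cvg_enorm_squeeze (fun m => 2 * K2 / K1 *
  (enorm (dir (g1 (t m)) - a0) + enorm (dir (g2 (s m)) - a0)) + enorm (dir (am m) - a))).
  apply: filterS2 s_rho rho_pos => m g2_rho rho_gt0.
  have g1t_neq0 : g1 (t m) != 0 by rewrite -enorm_eq0 gt_eqF.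
  rewrite -(tP m).2; apply: le_trans (ler_enorm_distD _ (dir (h (g1 (t m)))) _) _.
  rewrite lerD2r enorm_distC.
  apply: le_trans (enorm_dirB_bilip _ _ (g1_ball _ (tP m).1) (g2_ball _ (sI' m))
    g1t_neq0 (esym g2_rho)) _.
  by rewrite ler_wpM2l // [enorm (dir (g2 _) - a0)]enorm_distC ler_enorm_distD.
rewrite [X in _ --> X](_ : 0 = 2 * K2 / K1 * (0 + 0) + 0); last by rewrite !addr0 mulr0.
by apply: cvgD dam0; apply: cvgMl_tmp; apply: cvgD dg1 dg2.
Qed.

End BiLipschitz.

Theorem lemma4p8 (R : realType) (n : nat) (h : 'rV[R]_n -> 'rV[R]_n)
    (gam1 gam2 : R -> 'rV[R]_n) :
  bilip_homeo_germ h -> analytic_arc gam1 -> analytic_arc gam2 ->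
  (exists a0, tangent_to gam1 a0 /\ tangent_to gam2 a0) ->
  exists d0 : R, 0 < d0 /\
    forall d : R, 0 < d <= d0 ->
      (forall (am : nat -> 'rV[R]_n) (a : 'rV[R]_n),
         (forall m, arc_image h gam1 d (am m)) ->
         am @ \oo --> (0 : 'rV[R]_n) ->
         @sphere R n a ->
         (fun m => dir (am m)) @ \oo --> a ->
         exists bm : nat -> 'rV[R]_n,
           [/\ (forall m, arc_image h gam2 d (bm m) /\ bm m <> 0),
               bm @ \oo --> (0 : 'rV[R]_n)
             & (fun m => dir (bm m)) @ \oo --> a]) /\
      dirset (arc_image h gam1 d) = dirset (arc_image h gam2 d).
Proof.
move=> [h0 [_ [K1 [K2 [r [K1_gt0 K12 r_gt0 h_bilip]]]]]].
move=> /analytic_arc_norm_continuous[e1 e1_gt0 arc1].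
move=> /analytic_arc_norm_continuous[e2 e2_gt0 arc2] [a0 [tan1 tan2]].
have [del1 /andP[del1_gt0 del1_e1] ball1] := arc_enorm_lt_near0 arc1 r e1_gt0 r_gt0.
have [del2 /andP[del2_gt0 del2_e2] ball2] := arc_enorm_lt_near0 arc2 r e2_gt0 r_gt0.
exists (Num.min del1 del2); split; first by rewrite lt_min del1_gt0.
move=> d /andP[d_gt0]; rewrite le_min => /andP[d_del1 d_del2].
have arc1_d : norm_continuous_arc gam1 d.
  by apply: norm_continuous_arcW arc1; apply: le_trans del1_e1.
have arc2_d : norm_continuous_arc gam2 d.
  by apply: norm_continuous_arcW arc2; apply: le_trans del2_e2.
have ball1_d t : 0 <= t <= d -> enorm (gam1 t) < r.
  by case/andP => t0 td; apply: ball1; rewrite t0 (le_trans td).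
have ball2_d t : 0 <= t <= d -> enorm (gam2 t) < r.
  by case/andP => t0 td; apply: ball2; rewrite t0 (le_trans td).
have transfer12 := arc_image_dir_transfer K1_gt0 K12 h0 h_bilip d_gt0
  arc1_d arc2_d ball1_d ball2_d tan1 tan2.
have transfer21 := arc_image_dir_transfer K1_gt0 K12 h0 h_bilip d_gt0
  arc2_d arc1_d ball2_d ball1_d tan2 tan1.
split=> //; apply/seteqP; split; exact: dirset_subset.
Qed.
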